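(* Let $t$ be an indeterminate, let $\mathbf K$ be an infinite subset of $\mathbb C\setminus\{0,1\}$, and let $\mathbb F$ be a subring of $\mathbb C(t)$ with $$\mathbb C[t,t^{-1}]\subseteq \mathbb F\subseteq\{f/g : f,g\in\mathbb C[t],\ g(1)\neq 0,\ g(\lambda)\neq0\ \forall \lambda\in\mathbf K\}.$$ Let $A$ be the $\mathbb F$-algebra generated by $x_1,\dots,x_n$ subject to finitely many relations $f_1,\dots,f_m$, each $f_i=\sum_{\mathbf x}a^i_{\mathbf x}(t)\mathbf x$ an $\mathbb F$-linear combination of monomials $\mathbf x$ in the $x_j$. Assume $t-1$ is a nonzero, nonunit, non-zero-divisor of $A$ and that $A_1:=A/(t-1)A$ is commutative; let $\gamma_1:A\to A_1$ be the canonical map. For $\lambda\in\mathbf K$ let $A_\lambda$ be the $\mathbb C$-algebra generated by $x_1,\dots,x_n$ subject to the relations $f_i|_{t=\lambda}=\sum_{\mathbf x}a^i_{\mathbf x}(\lambda)\mathbf x$, and let $\gamma_\lambda:A\to A_\lambda$ be the $\mathbb C$-algebra homomorphism with $\gamma_\lambda(t)=\lambda$, $\gamma_\lambda(x_j)=x_j$. Let $\widehat A=\prod_{\lambda\in\mathbf K}A_\lambda$ and $\gamma:A\to\widehat A$, $\gamma(a)=(\gamma_\lambda(a))_{\lambda\in\mathbf K}$. Assume there is an $\mathbb F$-basis $\{\xi_i\}_{i\in I}$ of $A$ such that $\{\gamma_1(\xi_i)\}_{i\in I}$ is a $\mathbb C$-basis of $A_1$ and $\{\gamma_\lambda(\xi_i)\}_{i\in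 I}$ is a $\mathbb C$-basis of $A_\lambda$ for every $\lambda\in\mathbf K$. Then $\gamma$ is a monomorphism of $\mathbb C$-algebras.
   Context: All algebras are over $\mathbb C$ and unital. Elements of $\mathbb F$ are regular at $1$ and at every $\lambda\in\mathbf K$, so evaluating coefficients at $t=\lambda$ or $t=1$ is well defined. *)

From HB Require Import structures.
From mathcomp Require Import all_boot all_order all_algebra.
From mathcomp Require Import complex.
From mathcomp Require Import reals.
From Stdlib Require Import ClassicalEpsilon.
Set Implicit Arguments. Unset Strict Implicit. Unset Printing Implicit Defensive.
Import Order.TTheory GRing.Theory Num.Theory.
Local Open Scope ring_scope.

Notation CC R := (R[i]).
Notation CT R := {fraction {poly (R[i])}}.
Notation tofr p := (@FracField.tofrac _ p).
Notation tvar R := (tofr ('X : {poly (R[i])})).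
Notation cst R c := (tofr ((c : R[i])%:P)).

(* evaluation at z of a rational function x that is regular at z:
   the common value f(z)/g(z) for any representation x = f/g with g(z) <> 0
   (this value does not depend on the representation). *)
Definition feval (R : realType) (z : R[i]) (x : CT R) : R[i] :=
  epsilon (inhabits 0) (fun v => exists f g : {poly R[i]},
     g.[z] != 0 /\ x = tofr f / tofr g /\ v = f.[z] / g.[z]).

(* An element is a function from monomials (words in the letters 'I_n) to
   coefficients; genuine elements are those of finite support. *)
Definition ncpoly (K : Type) (n : nat) := seq 'I_n -> K.

Section NC.
Variables (K : pzRingType) (n : nat).
Definition ncfin (p : ncpoly K n) : Prop :=
  exists s : seq (seq 'I_n), forall w, w \notin s -> p w = 0.
Definition ncover (S : K -> Prop) (p : ncpoly K n) : Prop :=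
  ncfin p /\ forall w, S (p w).
Definition nc0 : ncpoly K n := fun _ => 0.
Definition ncadd (p q : ncpoly K n) : ncpoly K n := fun w => p w + q w.
Definition ncsub (p q : ncpoly K n) : ncpoly K n := fun w => p w - q w.
Definition ncscale (c : K) (p : ncpoly K n) : ncpoly K n := fun w => c * p w.
Definition ncmul (p q : ncpoly K n) : ncpoly K n :=
  fun w => \sum_(i < (size w).+1) p (take i w) * q (drop i w).
Definition ncmono (u : seq 'I_n) : ncpoly K n := fun w => (w == u)%:R.
Definition ncone : ncpoly K n := ncmono [::].
Definition ncvar (j : 'I_n) : ncpoly K n := ncmono [:: j].

Definition ncideal (S : K -> Prop) (m : nat) (fs : 'I_m -> ncpoly K n)
    (p : ncpoly K n) : Prop :=
  exists (k : nat) (u v : 'I_k -> ncpoly K n) (idx : 'I_k -> 'I_m),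
    (forall j, ncover S (u j) /\ ncover S (v j)) /\
    p = \big[ncadd/nc0]_(j < k) ncmul (ncmul (u j) (fs (idx j))) (v j).
End NC.

(* A family xi : I -> V of elements of (the set D of representatives of) the
   quotient D / J is a basis over the scalars S (acting by sc):
   every element is a finite S-combination of the xi modulo J, and every
   finite S-combination of pairwise distinct xi lying in J is trivial. *)
Definition quot_basis (K : pzRingType) (V I : Type) (S : K -> Prop)
    (sc : K -> V -> V) (add sub : V -> V -> V) (z : V)
    (D J : V -> Prop) (xi : I -> V) : Prop :=
  (forall p, D p -> exists (k : nat) (idx : 'I_k -> I) (c : 'I_k -> K),
      (forall j, S (c j)) /\
      J (sub p (\big[add/z]_(j < k) sc (c j) (xi (idx j))))) /\
  (forall (k : nat) (idx : 'I_k -> I) (c : 'I_k -> K),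
      injective idx -> (forall j, S (c j)) ->
      J (\big[add/z]_(j < k) sc (c j) (xi (idx j))) -> forall j, c j = 0).

Definition gam (R : realType) (n : nat) (z : R[i]) (p : ncpoly (CT R) n)
  : ncpoly (R[i]) n := fun w => feval z (p w).

(* the ideal (t-1)A + (relations) defining A_1 = A/(t-1)A, in F<x> *)
Definition ideal1 (R : realType) (n m : nat) (F : CT R -> Prop)
    (fs : 'I_m -> ncpoly (CT R) n) (p : ncpoly (CT R) n) : Prop :=
  exists q r, ncideal F fs q /\ ncover F r /\
    p = ncadd q (ncscale (tvar R - 1) r).

From mathcomp Require Import all_boot all_algebra.
From mathcomp Require Import complex reals.
From Stdlib Require Import Classical ClassicalEpsilon FunctionalExtensionality.
Import GRing.Theory.
Set Implicit Arguments. Unset Strict Implicit. Unset Printing Implicit Defensive.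
Local Open Scope ring_scope.

(* Modulo the relations, an element a of A is an F-combination sum_j c_j xi_(i_j),
   and we may assume the i_j pairwise distinct.  If gamma(a) = 0, then for every
   lambda in K the family (gamma_lambda xi_i) being free in A_lambda gives
   c_j(lambda) = 0; a rational function regular on the infinite set K and vanishing
   on it is zero, so a = 0 in A. *)

Lemma tofrac_div_eq {D : idomainType} {f g f' g' : D} : g != 0 -> g' != 0 ->
  FracField.tofrac f / FracField.tofrac g = FracField.tofrac f' / FracField.tofrac g' ->
  f * g' = f' * g.
Proof.
move=> g0 g'0 E; apply/eqP; rewrite -tofrac_eq !tofracM.
by rewrite -eqr_div ?tofrac_eq0 // E.
Qed.

Section Evaluation.
Variables (R : realType) (z : R[i]).

Definition regular (x : CT R) :=
  exists f g : {poly R[i]}, g.[z] != 0 /\ x = tofr f / tofr g.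

Lemma poly_neq0_of_horner {g : {poly R[i]}} : g.[z] != 0 -> g != 0.
Proof. by apply: contra => /eqP ->; rewrite horner0. Qed.

Lemma tofrac_neq0 (g : {poly R[i]}) : g.[z] != 0 -> tofr g != 0.
Proof. by rewrite tofrac_eq0; apply: poly_neq0_of_horner. Qed.

Lemma feval_frac (f g : {poly R[i]}) : g.[z] != 0 ->
  feval z (tofr f / tofr g) = f.[z] / g.[z].
Proof.
move=> gz; rewrite /feval; set P := fun v => _.
have /(ex_intro P) /(epsilon_spec (inhabits 0)) : P (f.[z] / g.[z]) by exists f, g.
move: (epsilon _ _) => v [f' [g' [g'z [E ->]]]].
have := tofrac_div_eq (poly_neq0_of_horner g'z) (poly_neq0_of_horner gz) (esym E).
by move=> /(congr1 (horner^~ z)); rewrite !hornerM => h; apply/eqP; rewrite eqr_div // h.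
Qed.

Lemma feval_tofrac (f : {poly R[i]}) : feval z (tofr f) = f.[z].
Proof.
have := @feval_frac f 1; rewrite tofrac1 divr1 hornerC divr1; apply.
exact: oner_neq0.
Qed.

Lemma regular_tofrac (f : {poly R[i]}) : regular (tofr f).
Proof. by exists f, 1; rewrite hornerC oner_neq0 tofrac1 divr1. Qed.

Lemma regularD x y : regular x -> regular y -> regular (x + y).
Proof.
move=> [f1 [g1 [g1z ->]]] [f2 [g2 [g2z ->]]].
exists (f1 * g2 + f2 * g1), (g1 * g2); rewrite hornerM mulf_neq0 //.
by rewrite addf_div ?tofrac_neq0 // tofracD !tofracM.
Qed.

Lemma fevalD x y : regular x -> regular y -> feval z (x + y) = feval z x + feval z y.
Proof.
move=> [f1 [g1 [g1z ->]]] [f2 [g2 [g2z ->]]].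
rewrite addf_div ?tofrac_neq0 // -!tofracM -tofracD !feval_frac ?hornerM ?mulf_neq0 //.
by rewrite hornerD !hornerM addf_div.
Qed.

Lemma fevalM x y : regular x -> regular y -> feval z (x * y) = feval z x * feval z y.
Proof.
move=> [f1 [g1 [g1z ->]]] [f2 [g2 [g2z ->]]].
by rewrite mulf_div -!tofracM !feval_frac ?hornerM ?mulf_neq0 // mulf_div.
Qed.

Lemma fevalN x : regular x -> feval z (- x) = - feval z x.
Proof.
by move=> [f [g [gz ->]]]; rewrite -mulNr -tofracN !feval_frac // hornerN mulNr.
Qed.

Lemma feval_sum k (G : 'I_k -> CT R) : (forall j, regular (G j)) ->
  feval z (\sum_(j < k) G j) = \sum_(j < k) feval z (G j).
Proof.
elim: k G => [|k IH] G HG; first by rewrite !big_ord0 -tofrac0 feval_tofrac horner0.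
rewrite !big_ord_recr /= fevalD ?IH //.
by apply: big_ind => //; [rewrite -tofrac0; apply: regular_tofrac | apply: regularD].
Qed.

Lemma feval_natr k : feval z k%:R = k%:R.
Proof. by rewrite -(rmorph_nat (@FracField.tofrac _)) feval_tofrac -polyC_natr hornerC. Qed.

End Evaluation.

Lemma infinite_uniq_seq (T : eqType) (P : T -> Prop) k :
  ~ (exists s : seq T, forall x, P x -> x \in s) ->
  exists s : seq T, [/\ uniq s, size s = k & forall x, x \in s -> P x].
Proof.
move=> Pinf; elim: k => [|k [s [us ss sP]]]; first by exists [::].
have [x [Px xs]] : exists x, P x /\ x \notin s.
  apply: NNPP => none; apply: Pinf; exists s => x Px.
  by apply: contraT => xs; case: none; exists x.
exists (x :: s); split; rewrite /= ?xs ?ss //.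
by move=> y; rewrite inE => /predU1P [->|/sP].
Qed.

Lemma poly_eq0_of_infinite_roots (D : idomainType) (P : D -> Prop) (f : {poly D}) :
  ~ (exists s : seq D, forall x, P x -> x \in s) ->
  (forall x, P x -> f.[x] = 0) -> f = 0.
Proof.
move=> Pinf f0; apply: contraTeq isT => fn0.
have [s [us ss sP]] := infinite_uniq_seq (size f) Pinf.
have froots : all (root f) s by apply/allP => x /sP /f0 /eqP.
by have := max_poly_roots fn0 froots us; rewrite ss ltnn.
Qed.

Lemma sum_merge_dup (S : pzSemiRingType) (T : Type) k (X : T -> S)
    (idx : 'I_k.+1 -> T) (c : 'I_k.+1 -> S) j1 j2 :
  idx j1 = idx j2 -> j1 != j2 ->
  \sum_(j < k.+1) c j * X (idx j) =
  \sum_(i < k) (c (lift j2 i) + (lift j2 i == j1)%:R * c j2) * X (idx (lift j2 i)).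
Proof.
move=> idx12 j12.
have collapse : \sum_(j < k.+1) (j == j1)%:R * c j2 * X (idx j) = c j2 * X (idx j2).
  rewrite (bigD1 j1) //= eqxx mul1r idx12 big1 ?addr0 // => j /negbTE ->.
  by rewrite !mul0r.
rewrite (bigD1_ord j2) //= -collapse (bigD1_ord j2) //= eq_sym (negbTE j12).
rewrite !mul0r add0r addrC -big_split /=.
by apply: eq_bigr => i _; rewrite mulrDl.
Qed.

Section NcPolyTheory.
Variables (K : pzRingType) (n : nat).
Implicit Types p q : ncpoly K n.

Lemma ncext p q : (forall w, p w = q w) -> p = q.
Proof. exact: functional_extensionality. Qed.

Lemma ncsumE k (P : 'I_k -> ncpoly K n) w :
  (\big[@ncadd K n/@nc0 K n]_(j < k) P j) w = \sum_(j < k) P j w.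
Proof. by elim/big_rec2: _ => // j a b _ <-. Qed.

Lemma ncmulZl c p q : ncmul (ncscale c p) q = ncscale c (ncmul p q).
Proof.
by apply: ncext => w; rewrite /ncmul /ncscale mulr_sumr; apply: eq_bigr => i _; rewrite mulrA.
Qed.

Variables (S : K -> Prop) (m : nat) (fs : 'I_m -> ncpoly K n).

Lemma ncideal0 : ncideal S fs (@nc0 K n).
Proof.
exists 0, (fun _ => @nc0 K n), (fun _ => @nc0 K n), (widen_ord (leq0n m)).
by split; [case | rewrite big_ord0].
Qed.

Lemma ncidealD p q : ncideal S fs p -> ncideal S fs q -> ncideal S fs (ncadd p q).
Proof.
move=> [k1 [u1 [v1 [i1 [H1 ->]]]]] [k2 [u2 [v2 [i2 [H2 ->]]]]].
pose glue T (a : 'I_k1 -> T) (b : 'I_k2 -> T) j :=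
  match split j with inl j' => a j' | inr j' => b j' end.
exists (k1 + k2), (glue _ u1 u2), (glue _ v1 v2), (glue _ i1 i2); split.
  by move=> j; rewrite /glue; case: (split j).
apply: ncext => w; rewrite /ncadd !ncsumE big_split_ord /glue.
by congr (_ + _); apply: eq_bigr => j _; rewrite ?(unsplitK (inl j)) ?(unsplitK (inr j)).
Qed.

Hypothesis S_opp : forall x, S x -> S (- x).

Lemma ncidealN p : ncideal S fs p -> ncideal S fs (ncscale (-1) p).
Proof.
move=> [k [u [v [ix [H ->]]]]].
exists k, (fun j => ncscale (-1) (u j)), v, ix; split.
  move=> j; have [[[s Hs] Su] Hv] := H j; split=> //; split=> [|w].
    by exists s => w /Hs; rewrite /ncscale => ->; rewrite mulr0.
  by rewrite /ncscale mulN1r; apply: S_opp.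
apply: ncext => w; rewrite /ncscale !ncsumE mulr_sumr.
by apply: eq_bigr => j _; rewrite !ncmulZl.
Qed.

Lemma ncidealB p q : ncideal S fs p -> ncideal S fs q -> ncideal S fs (ncsub p q).
Proof.
move=> Ip /ncidealN Iq; have -> : ncsub p q = ncadd p (ncscale (-1) q).
  by apply: ncext => w; rewrite /ncsub /ncadd /ncscale mulN1r.
exact: ncidealD.
Qed.

End NcPolyTheory.

Section GammaProperties.
Variables (R : realType) (n : nat) (z : R[i]).

Lemma gam_fin (p : ncpoly (CT R) n) : ncfin p -> ncfin (gam z p).
Proof.
by move=> [s sP]; exists s => w /sP; rewrite /gam => ->; rewrite -tofrac0 feval_tofrac horner0.
Qed.

Lemma gam_mono u : gam z (@ncmono (CT R) n u) = @ncmono (R[i]) n u.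
Proof. by apply: ncext => w; rewrite /gam /ncmono feval_natr. Qed.

Lemma gam_tvar : gam z (ncscale (tvar R) (@ncone (CT R) n)) = ncscale z (@ncone (R[i]) n).
Proof.
apply: ncext => w; rewrite /gam /ncscale /ncone /ncmono.
rewrite -(rmorph_nat (@FracField.tofrac _)) -rmorphM feval_tofrac.
by rewrite mulr_natr hornerMn hornerX mulr_natr.
Qed.

End GammaProperties.

Section Specialization.
Variables (R : realType) (Kset : R[i] -> Prop) (F : CT R -> Prop).
Hypotheses (HF0 : F 0) (HF1 : F 1)
  (HFadd : forall x y, F x -> F y -> F (x + y))
  (HFopp : forall x, F x -> F (- x))
  (HFmul : forall x y, F x -> F y -> F (x * y))
  (HFreg : forall x, F x -> exists f g : {poly R[i]},
      (forall z, Kset z -> g.[z] != 0) /\ x = tofr f / tofr g).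

Lemma F_sum k (G : 'I_k -> CT R) : (forall j, F (G j)) -> F (\sum_(j < k) G j).
Proof. by move=> FG; apply: (big_ind F HF0 HFadd). Qed.

Definition F_coefs n (p : ncpoly (CT R) n) := forall w, F (p w).

Lemma regular_of_F z : Kset z -> forall x, F x -> regular z x.
Proof. by move=> Kz x /HFreg [f [g [gK ->]]]; exists f, g; split=> //; apply: gK. Qed.

Variables (n m : nat) (fs : 'I_m -> ncpoly (CT R) n).
Hypothesis Hfs : forall i, ncover F (fs i).

Local Notation ideal_at z := (ncideal (fun _ => True) (fun i => gam z (fs i))).

Section AtPointOfK.
Variables (z : R[i]) (Kz : Kset z).
Implicit Types p q : ncpoly (CT R) n.

Lemma gamD p q : F_coefs p -> F_coefs q -> gam z (ncadd p q) = ncadd (gam z p) (gam z q).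
Proof. by move=> Fp Fq; apply: ncext => w; apply: fevalD; apply: (regular_of_F Kz). Qed.

Lemma gamB p q : F_coefs p -> F_coefs q -> gam z (ncsub p q) = ncsub (gam z p) (gam z q).
Proof.
move=> Fp Fq; apply: ncext => w; rewrite /gam /ncsub fevalD ?fevalN //.
all: by apply: (regular_of_F Kz) => //; apply: HFopp.
Qed.

Lemma gamZ c p : regular z c -> F_coefs p ->
  gam z (ncscale c p) = ncscale (feval z c) (gam z p).
Proof.
by move=> c_reg Fp; apply: ncext => w; apply: fevalM => //; apply: (regular_of_F Kz).
Qed.

Lemma gamM p q : F_coefs p -> F_coefs q -> gam z (ncmul p q) = ncmul (gam z p) (gam z q).
Proof.
move=> Fp Fq; apply: ncext => w; rewrite /gam /ncmul feval_sum => [|j].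
  by apply: eq_bigr => j _; apply: fevalM; apply: (regular_of_F Kz).
by apply: (regular_of_F Kz); apply: HFmul.
Qed.

Lemma gam_sum k (P : 'I_k -> ncpoly (CT R) n) : (forall j, F_coefs (P j)) ->
  gam z (\big[@ncadd _ n/@nc0 _ n]_(j < k) P j) =
  \big[@ncadd _ n/@nc0 _ n]_(j < k) gam z (P j).
Proof.
move=> FP; apply: ncext => w; rewrite /gam !ncsumE feval_sum // => j.
by apply: (regular_of_F Kz); apply: FP.
Qed.

Lemma F_coefs_mul p q : F_coefs p -> F_coefs q -> F_coefs (ncmul p q).
Proof. by move=> Fp Fq w; apply: F_sum => j; apply: HFmul. Qed.

Lemma gam_ideal p : ncideal F fs p -> ideal_at z (gam z p).
Proof.
move=> [k [u [v [ix [uv ->]]]]].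
have Fu j : F_coefs (u j) by case: (uv j) => [[_ ?] _].
have Fv j : F_coefs (v j) by case: (uv j) => [_ [_ ?]].
have Ffs i : F_coefs (fs i) by case: (Hfs i).
exists k, (fun j => gam z (u j)), (fun j => gam z (v j)), ix; split.
  by move=> j; case: (uv j) => [[u_fin _] [v_fin _]]; split; split=> //; apply: gam_fin.
rewrite gam_sum => [|j]; last by apply: F_coefs_mul => //; apply: F_coefs_mul.
by apply: eq_bigr => j _; rewrite !gamM //; apply: F_coefs_mul.
Qed.

End AtPointOfK.

Hypothesis HKinf : ~ exists s : seq (R[i]), forall z, Kset z -> z \in s.

Lemma F_eq0_of_feval_eq0 c : F c -> (forall z, Kset z -> feval z c = 0) -> c = 0.
Proof.
move=> Fc; have [f [g [gK ->]]] := HFreg Fc => c0.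
suff -> : f = 0 by rewrite tofrac0 mul0r.
apply: (poly_eq0_of_infinite_roots HKinf) => x Kx; apply/eqP.
have := c0 x Kx; rewrite feval_frac ?gK // => /eqP.
by rewrite mulf_eq0 invr_eq0 (negbTE (gK x Kx)) orbF.
Qed.

Variables (I : Type) (xi : I -> ncpoly (CT R) n).
Hypotheses (Hxi : forall i, ncover F (xi i))
  (HbasisAl : forall z, Kset z ->
      quot_basis (fun _ : R[i] => True) (@ncscale (R[i]) n)
        (@ncadd _ n) (@ncsub _ n) (@nc0 (R[i]) n) (@ncfin _ n)
        (ideal_at z) (fun i => gam z (xi i))).

Definition xi_comb k (idx : 'I_k -> I) (c : 'I_k -> CT R) :=
  \big[@ncadd _ n/@nc0 _ n]_(j < k) ncscale (c j) (xi (idx j)).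

Lemma F_coefs_xi_comb k (idx : 'I_k -> I) c : (forall j, F (c j)) -> F_coefs (xi_comb idx c).
Proof.
move=> Fc w; rewrite /xi_comb ncsumE; apply: F_sum => j.
by apply: HFmul => //; case: (Hxi (idx j)).
Qed.

Lemma gam_xi_comb z k (idx : 'I_k -> I) c : Kset z -> (forall j, F (c j)) ->
  gam z (xi_comb idx c) =
  \big[@ncadd _ n/@nc0 _ n]_(j < k) ncscale (feval z (c j)) (gam z (xi (idx j))).
Proof.
move=> Kz Fc; rewrite gam_sum // => [|j]; last first.
  by move=> w; apply: HFmul => //; case: (Hxi (idx j)).
apply: eq_bigr => j _; rewrite gamZ //; first exact: (regular_of_F Kz).
by case: (Hxi (idx j)).
Qed.

Lemma xi_comb_coef_eq0 k (idx : 'I_k -> I) c : injective idx -> (forall j, F (c j)) ->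
  (forall z, Kset z -> ideal_at z (gam z (xi_comb idx c))) ->
  forall j, c j = 0.
Proof.
move=> idx_inj Fc Jc j; apply: F_eq0_of_feval_eq0 => // z Kz.
apply: ((HbasisAl Kz).2 _ idx (fun j => feval z (c j)) idx_inj (fun _ => Logic.I)).
by rewrite -gam_xi_comb //; apply: Jc.
Qed.

Lemma xi_comb_merge k (idx : 'I_k.+1 -> I) c j1 j2 : idx j1 = idx j2 -> j1 != j2 ->
  xi_comb idx c = xi_comb (fun i => idx (lift j2 i))
                          (fun i => c (lift j2 i) + (lift j2 i == j1)%:R * c j2).
Proof.
move=> idx12 j12; apply: ncext => w; rewrite /xi_comb !ncsumE.
exact: (sum_merge_dup (fun i => xi i w) c idx12 j12).
Qed.

Lemma xi_comb_in_ideal k (idx : 'I_k -> I) c : (forall j, F (c j)) ->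
  (forall z, Kset z -> ideal_at z (gam z (xi_comb idx c))) ->
  ncideal F fs (xi_comb idx c).
Proof.
elim: k idx c => [|k IH] idx c Fc Jc.
  by rewrite /xi_comb big_ord0; apply: ncideal0.
have [idx_inj|idx_ninj] := classic (injective idx).
  have c0 := xi_comb_coef_eq0 idx_inj Fc Jc.
  suff -> : xi_comb idx c = @nc0 _ n by apply: ncideal0.
  by apply: ncext => w; rewrite /xi_comb ncsumE big1 // => j _; rewrite /ncscale c0 mul0r.
have [j1 [j2 [idx12 j12]]] : exists j1 j2, idx j1 = idx j2 /\ j1 != j2.
  apply: NNPP => none; apply: idx_ninj => a b ab.
  by apply/eqP; apply: contraT => nab; case: none; exists a, b.
rewrite (xi_comb_merge c idx12 j12) in Jc *; apply: IH => // i.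
by apply: HFadd => //; apply: HFmul => //; case: (_ == _).
Qed.

Hypothesis HbasisA : quot_basis F (@ncscale (CT R) n) (@ncadd _ n) (@ncsub _ n)
  (@nc0 (CT R) n) (ncover F) (ncideal F fs) xi.

Lemma ideal_of_gam_ideal p : ncover F p ->
  (forall z, Kset z -> ideal_at z (gam z p)) ->
  ncideal F fs p.
Proof.
move=> Fp Jp; have [k [idx [c [Fc Jdiff]]]] := HbasisA.1 p Fp.
have Fp_coefs : F_coefs p by case: Fp.
have Fcomb := F_coefs_xi_comb idx Fc.
have Jcomb : ncideal F fs (xi_comb idx c).
  apply: xi_comb_in_ideal => // z Kz.
  have := gam_ideal Kz Jdiff; rewrite gamB // => Jd.
  have -> : gam z (xi_comb idx c) =
      ncsub (gam z p) (ncsub (gam z p) (gam z (xi_comb idx c))).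
    by apply: ncext => w; rewrite /ncsub opprB addrC subrK.
  by apply: ncidealB => //; apply: Jp.
have -> : p = ncadd (ncsub p (xi_comb idx c)) (xi_comb idx c).
  by apply: ncext => w; rewrite /ncadd /ncsub subrK.
exact: (ncidealD Jdiff Jcomb).
Qed.

End Specialization.

Theorem lemma1p2
  (R : realType)
  (Kset : R[i] -> Prop)
  (F : CT R -> Prop)
  (n m : nat) (fs : 'I_m -> ncpoly (CT R) n)
  (I : Type) (xi : I -> ncpoly (CT R) n)
  (* K is an infinite subset of C \ {0,1} *)
  (HK01 : forall z, Kset z -> z != 0 /\ z != 1)
  (HKinf : ~ exists s : seq (R[i]), forall z, Kset z -> z \in s)
  (* F is a subring of C(t) *)
  (HF0 : F 0) (HF1 : F 1)
  (HFadd : forall x y, F x -> F y -> F (x + y))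
  (HFopp : forall x, F x -> F (- x))
  (HFmul : forall x y, F x -> F y -> F (x * y))
  (* C[t,t^-1] is contained in F *)
  (HFlaurent : forall (p : {poly R[i]}) (k : nat), F (tofr p / tvar R ^+ k))
  (* F consists of rational functions f/g with g(1) <> 0, g(lambda) <> 0 *)
  (HFreg : forall x, F x -> exists f g : {poly R[i]},
      g.[1] != 0 /\ (forall z, Kset z -> g.[z] != 0) /\ x = tofr f / tofr g)
  (* relations are F-linear combinations of monomials *)
  (Hfs : forall i, ncover F (fs i))
  (* t - 1 is nonzero in A *)
  (Ht1nz : ~ ncideal F fs (ncscale (tvar R - 1) (@ncone (CT R) n)))
  (* t - 1 is not a unit of A *)
  (Ht1nu : ~ exists q : ncpoly (CT R) n, ncover F q /\
      ncideal F fs (ncsub (ncmul (ncscale (tvar R - 1) (@ncone (CT R) n)) q)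
                          (@ncone (CT R) n)) /\
      ncideal F fs (ncsub (ncmul q (ncscale (tvar R - 1) (@ncone (CT R) n)))
                          (@ncone (CT R) n)))
  (* t - 1 is not a zero divisor of A *)
  (Ht1nzd : forall q : ncpoly (CT R) n, ncover F q ->
      ncideal F fs (ncmul (ncscale (tvar R - 1) (@ncone (CT R) n)) q) ->
      ncideal F fs q)
  (* A_1 = A/(t-1)A is commutative *)
  (HA1comm : forall p q : ncpoly (CT R) n, ncover F p -> ncover F q ->
      ideal1 F fs (ncsub (ncmul p q) (ncmul q p)))
  (* {xi_i} is an F-basis of A *)
  (Hxi : forall i, ncover F (xi i))
  (HbasisA : quot_basis F (@ncscale (CT R) n) (@ncadd _ n) (@ncsub _ n)
               (@nc0 (CT R) n) (ncover F) (ncideal F fs) xi)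
  (* {gamma_1 xi_i} is a C-basis of A_1 *)
  (HbasisA1 : quot_basis (fun _ : R[i] => True)
               (fun c p => ncscale (cst R c) p) (@ncadd _ n) (@ncsub _ n)
               (@nc0 (CT R) n) (ncover F) (ideal1 F fs) xi)
  (* {gamma_lambda xi_i} is a C-basis of A_lambda for every lambda in K *)
  (HbasisAl : forall z, Kset z ->
      quot_basis (fun _ : R[i] => True) (@ncscale (R[i]) n)
        (@ncadd _ n) (@ncsub _ n) (@nc0 (R[i]) n) (@ncfin _ n)
        (ncideal (fun _ => True) (fun i => gam z (fs i)))
        (fun i => gam z (xi i))) :
  (* gamma = (gamma_lambda)_lambda is a well-defined C-algebra homomorphism
     A -> prod_lambda A_lambda ... *)
  (forall z, Kset z ->
     (forall p : ncpoly (CT R) n, ncover F p -> ncfin (gam z p)) /\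
     (forall p : ncpoly (CT R) n, ncover F p -> ncideal F fs p ->
        ncideal (fun _ => True) (fun i => gam z (fs i)) (gam z p)) /\
     (forall p q : ncpoly (CT R) n, ncover F p -> ncover F q ->
        gam z (ncadd p q) = ncadd (gam z p) (gam z q)) /\
     (forall p q : ncpoly (CT R) n, ncover F p -> ncover F q ->
        gam z (ncmul p q) = ncmul (gam z p) (gam z q)) /\
     (forall (c : R[i]) (p : ncpoly (CT R) n), ncover F p ->
        gam z (ncscale (cst R c) p) = ncscale c (gam z p)) /\
     gam z (@ncone (CT R) n) = @ncone (R[i]) n /\
     gam z (ncscale (tvar R) (@ncone (CT R) n)) = ncscale z (@ncone (R[i]) n) /\
     (forall j, gam z (@ncvar (CT R) n j) = @ncvar (R[i]) n j)) /\
  (* ... which is injective *)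
  (forall p : ncpoly (CT R) n, ncover F p ->
     (forall z, Kset z ->
        ncideal (fun _ => True) (fun i => gam z (fs i)) (gam z p)) ->
     ncideal F fs p).
Proof.
have HFregK : forall x, F x -> exists f g : {poly R[i]},
    (forall z, Kset z -> g.[z] != 0) /\ x = tofr f / tofr g.
  by move=> x /HFreg [f [g [_ fg]]]; exists f, g.
split=> [z Kz|p Fp Jp]; last first.
  exact: (ideal_of_gam_ideal HF0 HF1 HFadd HFopp HFmul HFregK Hfs HKinf Hxi HbasisAl HbasisA Fp Jp).
split; first by move=> p [p_fin _]; apply: gam_fin.
split; first by move=> p [_ Fp]; apply: (gam_ideal HF0 HFadd HFmul HFregK Hfs Kz).
split; first by move=> p q [_ Fp] [_ Fq]; apply: (gamD HFregK Kz).
split; first by move=> p q [_ Fp] [_ Fq]; apply: (gamM HFmul HFregK Kz).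
split.
  move=> c p [_ Fp]; rewrite (gamZ HFregK Kz) ?feval_tofrac ?hornerC //.
  exact: regular_tofrac.
by split; [exact: gam_mono | split; [exact: gam_tvar | move=> j; exact: gam_mono]].
Qed.
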